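(* Let $A\in\mathcal{A}_{n,1}$ and $(N,E)=\Lambda(A)$. Then $-\ell(N)\le B(A)\le c(N)$.
   Context: An alternating sign matrix (ASM) of order $n$ is an $n\times n$ matrix $A=(a_{ij})$ with entries in $\{-1,0,1\}$ such that in every row and every column the nonzero entries alternate in sign, the first and the last nonzero entries being $1$. $\mathcal{A}_{n,s}$ denotes the set of order-$n$ ASMs having exactly $s$ entries equal to $-1$ (so $\mathcal{A}_{n,0}$ is the set of $n\times n$ permutation matrices). For an ASM $A=(a_{ij})$, $\overline{A}=(a_{i,n+1-j})$ is the vertical reflection of $A$. Let $A\in\mathcal{A}_{n,1}$. The opening column is the column containing the unique $-1$; the closing row is the row containing the $-1$; the opening row is the row of the $1$ of the opening column lying above the $-1$. The columns strictly to the left (resp. right) of the opening column form the left side (resp. right side). The closing row contains exactly two $1$'s, one in each side; the one in the right side is the closing $1$ and its column is the closing column. The rows strictly between the opening row and the closing row are the enclosed rows. $A$ is neutral if there are no enclosed rows; otherwise $A$ is positive if the $1$ of the lowest enclosed row lies in the right side, and negative if it lies in the left side. $\mathcal{A}_{n,1}^{+},\mathcal{A}_{n,1}^{0},\mathcal{A}_{n,1}^{-}$ denote the sets of positive, neutral, negative elements of $\mathcal{A}_{n,1}$; $A$ is negative iff $\overline{A}$ is positive. For $A\in\mathcal{A}_{n,1}^{+}\cup\mathcal{A}_{n,1}^{0}$: the charged cell is the intersection of the enclosed rows with the right side; the extended neutral cell is the intersection of the rows from the opening row to the closing row (inclusive) with the left side. The leading $1$ is the highest $1$ in the left side strictly below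 the opening row; its column is the leading column; the leading cell consists of the entries strictly below the opening row and strictly between the leading column and the opening column, and $\ell(A)$ is the sum of its entries. The closing cell consists of the entries strictly below the closing row and strictly between the opening column and the closing column, and $c(A)$ is the sum of its entries; the extended closing cell consists of the entries strictly below the closing row in the columns from the opening column to the closing column inclusive. Parameters: if $A$ is positive, $E(A)$ is the sum of the entries of the charged cell; if $A$ is neutral, $E(A)=0$; if $A$ is negative, $E(A)=-E(\overline{A})$. For $A\in\mathcal{A}_{n,1}^{+}\cup\mathcal{A}_{n,1}^{0}$, $B(A)=c(A)-\ell(A)$; for $A\in\mathcal{A}_{n,1}^{-}$, $B(A)=-B(\overline{A})$. Horizontal displacement: for an $m\times q$ $(0,1)$-matrix $P$ whose nonzero columns are $j_1<\dots<j_t$ with $j_1=1$ and $j_t<q$, $H(P)$ is the $m\times q$ matrix whose column $j_{s+1}$ equals column $j_s$ of $P$ for $1\le s\le t$ (where $j_{t+1}=q$), all other columns being zero. Vertical displacement: for an $m\times q$ $(0,1)$-matrix $P$ whose nonzero rows are $i_1<\dots<i_t$ with $i_1>1$ and $i_t=m$, $V(P)$ is the $m\times q$ matrix whose row $i_{s-1}$ equals row $i_s$ of $P$ for $1\le s\le t$ (where $i_0=1$), all other rows being zero. Partial discharging procedure: for $A\in\mathcal{A}_{n,1}^{+}\cup\mathcal{A}_{n,1}^{0}$, $\delta(A)$ is obtained by applying successively the following steps (all cells, rows and columns referring to the positions they occupy in $A$): (1) replace the $-1$ and the closing $1$ by $0$; (2) replace the submatrix occupying the extended closing cell by its image under $H$;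 (3) replace the submatrix occupying the extended neutral cell by its image under $V$; (4) lower the entries of the extended neutral cell and of the charged cell by one row: in the left side, for each row $t$ strictly below the opening row up to and including the closing row, the left part of row $t$ becomes the former left part of row $t-1$, and the left part of the opening row becomes zero; in the right side, for each row $t$ from two rows below the opening row up to and including the closing row, the right part of row $t$ becomes the former right part of row $t-1$, and the right part of the row immediately below the opening row becomes zero. The complete discharging procedure is $\Delta(A)=(k,\delta(A),c(A),E(A))$, where $k$ is the index of the opening row of $A$. It is known that $\Delta$ is injective on $\mathcal{A}_{n,1}^{+}\cup\mathcal{A}_{n,1}^{0}$, and that whenever $\Delta(A)=(k,P,c,E)$, there is a unique $N\in\mathcal{A}_{n,1}^{+}\cup\mathcal{A}_{n,1}^{0}$ with $\Delta(N)=(k,P,c+E,0)$, and this $N$ is neutral. Neutralizing procedure $\Lambda$: for $A\in\mathcal{A}_{n,1}^{+}\cup\mathcal{A}_{n,1}^{0}$ with $\Delta(A)=(k,P,c,E)$, $\Lambda(A)=(N,E)$ where $N$ is the unique element with $\Delta(N)=(k,P,c+E,0)$. For $A\in\mathcal{A}_{n,1}^{-}$, write $\Lambda(\overline{A})=(M,-E)$ and set $\Lambda(A)=(\overline{M},E)$. *)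

(* Matrices are 'M[int]_n; all positional bookkeeping is done
   on 0-based natural-number indices (row i, column j, 0 <= i,j < n). *)
From mathcomp Require Import all_boot all_order all_algebra.
Set Implicit Arguments. Unset Strict Implicit. Unset Printing Implicit Defensive.
Import Order.TTheory GRing.Theory Num.Theory.

Definition ent {n} (A : 'M[int]_n) (i j : nat) : int :=
  match (insub i : option 'I_n), (insub j : option 'I_n) with
  | Some i', Some j' => A i' j'
  | _, _ => 0%R
  end.

Definition mkmx n (f : nat -> nat -> int) : 'M[int]_n :=
  \matrix_(i < n, j < n) f (nat_of_ord i) (nat_of_ord j).

Definition refl {n} (A : 'M[int]_n) : 'M[int]_n :=
  \matrix_(i < n, j < n) A i (rev_ord j).

Definition nzseq (s : seq int) : seq int := [seq x <- s | x != 0%R].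
Definition alt_ok (s : seq int) : bool :=
  let t := nzseq s in
  [&& head 0%R t == 1%R, last 0%R t == 1%R & sorted (fun x y => y == (- x)%R) t].

Definition is_asm {n} (A : 'M[int]_n) : bool :=
  [&& [forall i, forall j, A i j \in [:: (-1)%R; 0%R; 1%R]],
      [forall i : 'I_n, alt_ok [seq A i j | j <- enum 'I_n]] &
      [forall j : 'I_n, alt_ok [seq A i j | i <- enum 'I_n]]].

Definition num_neg {n} (A : 'M[int]_n) : nat :=
  #|[set ij : 'I_n * 'I_n | A ij.1 ij.2 == (-1)%R]|.

Definition in_ASM n (s : nat) (A : 'M[int]_n) : bool := is_asm A && (num_neg A == s).
Arguments in_ASM : clear implicits.

Definition cl_row {n} (A : 'M[int]_n) : nat :=
  find (fun i => has (fun j => ent A i j == (-1)%R) (iota 0 n)) (iota 0 n).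
Definition op_col {n} (A : 'M[int]_n) : nat :=
  find (fun j => ent A (cl_row A) j == (-1)%R) (iota 0 n).
Definition op_row {n} (A : 'M[int]_n) : nat :=
  find (fun i => (i < cl_row A)%N && (ent A i (op_col A) == 1%R)) (iota 0 n).
Definition cl_col {n} (A : 'M[int]_n) : nat :=
  find (fun j => (op_col A < j)%N && (ent A (cl_row A) j == 1%R)) (iota 0 n).

Definition neutral {n} (A : 'M[int]_n) : bool := cl_row A == (op_row A).+1.
Definition positive {n} (A : 'M[int]_n) : bool :=
  ((op_row A).+1 < cl_row A)%N &&
  has (fun j => (op_col A < j)%N && (ent A (cl_row A).-1 j == 1%R)) (iota 0 n).
Definition negative {n} (A : 'M[int]_n) : bool :=
  ((op_row A).+1 < cl_row A)%N &&
  has (fun j => (j < op_col A)%N && (ent A (cl_row A).-1 j == 1%R)) (iota 0 n).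

Definition rsum n (f : nat -> nat -> int) (P : nat -> nat -> bool) : int :=
  (\sum_(i < n) \sum_(j < n) (if P i j then f i j else 0))%R.

Definition charged {n} (A : 'M[int]_n) : int :=
  rsum n (ent A) (fun i j => (op_row A < i < cl_row A)%N && (op_col A < j)%N).

Definition lead_row {n} (A : 'M[int]_n) : nat :=
  find (fun i => (op_row A < i)%N &&
           has (fun j => (j < op_col A)%N && (ent A i j == 1%R)) (iota 0 n)) (iota 0 n).
Definition lead_col {n} (A : 'M[int]_n) : nat :=
  find (fun j => (j < op_col A)%N && (ent A (lead_row A) j == 1%R)) (iota 0 n).

Definition ell {n} (A : 'M[int]_n) : int :=
  rsum n (ent A) (fun i j => (op_row A < i)%N && (lead_col A < j < op_col A)%N).
Definition cpar {n} (A : 'M[int]_n) : int :=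
  rsum n (ent A) (fun i j => (cl_row A < i)%N && (op_col A < j < cl_col A)%N).

Definition Epar {n} (A : 'M[int]_n) : int :=
  if positive A then charged A
  else if negative A then (- charged (refl A))%R
  else 0%R.

Definition Bpar {n} (A : 'M[int]_n) : int :=
  if negative A then (- (cpar (refl A) - ell (refl A)))%R
  else (cpar A - ell A)%R.

(* Horizontal displacement H on the cell with rows {i | R i} and columns c0..c1:
   value at (i,j) of the cell after displacement.  Nonzero columns
   j_1 < ... < j_t; column j_{s+1} receives column j_s, with j_{t+1} = c1. *)
Definition Hdisp n (f : nat -> nat -> int) (R : nat -> bool) (c0 c1 : nat)
    (i j : nat) : int :=
  let nzc := fun j' => has (fun i' => R i' && (f i' j' != 0%R)) (iota 0 n) in
  let prev := [seq j' <- iota c0 (j - c0) | nzc j'] in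
  if (nzc j || (j == c1)) && (prev != [::]) then f i (last 0%N prev) else 0%R.

(* Vertical displacement V on the cell with rows r0..r1 and columns {j | C j}:
   nonzero rows i_1 < ... < i_t; row i_{s-1} receives row i_s, with i_0 = r0. *)
Definition Vdisp n (f : nat -> nat -> int) (C : nat -> bool) (r0 r1 : nat)
    (i j : nat) : int :=
  let nzr := fun i' => has (fun j' => C j' && (f i' j' != 0%R)) (iota 0 n) in
  let nxt := [seq i' <- iota i.+1 (r1 - i) | nzr i'] in
  if (nzr i || (i == r0)) && (nxt != [::]) then f (head 0%N nxt) j else 0%R.

Definition delta {n} (A : 'M[int]_n) : 'M[int]_n :=
  let r := cl_row A in let p := op_col A in
  let k := op_row A in let q := cl_col A in
  let a1 := fun i j => if (i == r) && ((j == p) || (j == q)) then 0%R else ent A i j in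
  let a2 := fun i j => if (r < i < n)%N && (p <= j <= q)%N
                       then Hdisp n a1 (fun i' => (r < i' < n)%N) p q i j
                       else a1 i j in
  let a3 := fun i j => if (k <= i <= r)%N && (j < p)%N
                       then Vdisp n a2 (fun j' => (j' < p)%N) k r i j
                       else a2 i j in
  let a4 := fun i j =>
    if (j < p)%N && (k <= i <= r)%N then (if i == k then 0%R else a3 i.-1 j)
    else if (p < j)%N && (k < i <= r)%N then (if i == k.+1 then 0%R else a3 i.-1 j)
    else a3 i j in
  mkmx n a4.

Definition Delta {n} (A : 'M[int]_n) : nat * 'M[int]_n * int * int :=
  (op_row A, delta A, cpar A, Epar A).

(* Lambda(A) = (N, E) for A positive or neutral *)
Definition Lambda_pn {n} (A N : 'M[int]_n) (E : int) : Prop :=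
  [/\ E = Epar A, in_ASM n 1 N, positive N || neutral N &
      Delta N = (op_row A, delta A, (cpar A + Epar A)%R, 0%R)].

Definition Lambda {n} (A N : 'M[int]_n) (E : int) : Prop :=
  if negative A then Lambda_pn (refl A) (refl N) (- E)%R
  else Lambda_pn A N E.

From mathcomp Require Import all_boot all_order all_algebra zify.
Set Implicit Arguments. Unset Strict Implicit. Unset Printing Implicit Defensive.
Import Order.TTheory GRing.Theory Num.Theory.

(* The leading, closing and charged cells avoid the unique -1, so ell A and c A
   are nonnegative, and so is E A unless A is negative.  In Lambda A = (N, E) the
   matrix N is neutral (E N = 0 rules out positivity), c N = c A + E A, and
   ell N = ell A because ell is determined by the pair (op_row A, delta A), which
   N shares with A.  Hence -ell N <= c A - ell A <= c N.  For negative A one argues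
   on the reflection of A, using that reflecting a neutral matrix exchanges its
   leading and closing cells. *)

Section AlternatingSequences.
Local Open Scope ring_scope.

Lemma alt_path_sums (s : seq int) (x : int) :
  (x == 1) || (x == -1) -> path (fun x y => y == - x) x (nzseq s) ->
  (forall m, 0 <= (x == 1)%:R + \sum_(y <- take m s) y <= 1) /\
  (x == 1)%:R + \sum_(y <- s) y = (last x (nzseq s) == 1)%:R.
Proof.
elim: s x => [|y s IH] x x_pm1 /=.
  by split=> [m|]; rewrite big_nil addr0 //; case: (x == 1).
rewrite /nzseq /=; case: ifP => [_ /andP [/eqP -> path_s] | /negbFE/eqP ->].
  have step : (x == 1)%:R + - x = (- x == 1)%:R :> int.
    by case/orP: x_pm1 => /eqP ->.
  have opp_pm1 : (- x == 1) || (- x == -1) by rewrite !eqr_oppLR opprK orbC.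
  have [IH1 IH2] := IH (- x) opp_pm1 path_s.
  split; last by rewrite big_cons addrA step.
  case=> [|m]; first by rewrite take0 big_nil addr0; case: (x == 1).
  by rewrite /= big_cons addrA step.
move=> path_s; have [IH1 IH2] := IH x x_pm1 path_s.
split; last by rewrite big_cons add0r.
case=> [|m]; first by rewrite take0 big_nil addr0; case: (x == 1).
by rewrite /= big_cons add0r.
Qed.

Lemma alt_ok_sums (s : seq int) : alt_ok s ->
  (forall m, 0 <= \sum_(y <- take m s) y <= 1) /\ \sum_(y <- s) y = 1.
Proof.
rewrite /alt_ok; case Es: (nzseq s) => [|z t] //=; case/and3P => /eqP z1 /eqP t1 path_t.
have path_s : path (fun x y => y == - x) (-1) (nzseq s) by rewrite Es /= z1 eqxx -z1.
have [sums total] := @alt_path_sums s (-1) (orbT _) path_s.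
split=> [m|]; first by have := sums m; rewrite add0r.
by move: total; rewrite add0r Es /= t1.
Qed.

Lemma alt_ok_iota_sums (f : nat -> int) n : alt_ok (map f (iota 0 n)) ->
  (forall m, (m <= n)%N -> 0 <= \sum_(j < m) f j <= 1) /\ \sum_(j < n) f j = 1.
Proof.
case/alt_ok_sums => sums total; split.
  move=> m le_mn; have := sums m.
  rewrite -map_take take_iota (minn_idPl le_mn) big_map.
  by rewrite -(big_mkord xpredT) /index_iota subn0.
by rewrite big_map in total; rewrite -(big_mkord xpredT) /index_iota subn0.
Qed.

Lemma alt_ok_rev (s : seq int) : alt_ok (rev s) = alt_ok s.
Proof.
rewrite /alt_ok /nzseq filter_rev; set t := [seq x <- s | x != 0].
have -> : head 0 (rev t) = last 0 t by case/lastP: t => // t' y; rewrite rev_rcons last_rcons.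
have -> : last 0 (rev t) = head 0 t by case: t => // y t'; rewrite rev_cons last_rcons.
have -> : sorted (fun x y => y == - x) (rev t) = sorted (fun x y => y == - x) t.
  rewrite rev_sorted; case: t => //= y t'; apply: eq_path => u v /=.
  by rewrite eq_sym eqr_oppLR.
by rewrite andbCA.
Qed.

End AlternatingSequences.

Section FindInIota.
Variables (P : pred nat) (n : nat).

Lemma find_iota_spec : has P (iota 0 n) ->
  [/\ find P (iota 0 n) < n, P (find P (iota 0 n)) &
      forall y, y < find P (iota 0 n) -> ~~ P y].
Proof.
move=> hasP_n; have lt_find : find P (iota 0 n) < n.
  by rewrite -[X in _ < X](size_iota 0 n) -has_find.
split=> //; first by have := nth_find 0 hasP_n; rewrite nth_iota.
move=> y lt_y; have := before_find 0 lt_y.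
by rewrite nth_iota ?add0n ?(ltn_trans lt_y) // => ->.
Qed.

Lemma find_iota_eq x : x < n -> P x -> (forall y, y < x -> ~~ P y) ->
  find P (iota 0 n) = x.
Proof.
move=> lt_xn Px x_min.
have hasP_n : has P (iota 0 n) by apply/hasP; exists x; rewrite ?mem_iota.
have [_ Pf f_min] := find_iota_spec hasP_n.
case: (ltngtP (find P (iota 0 n)) x) => // lt.
  by move: (x_min _ lt); rewrite Pf.
by move: (f_min _ lt); rewrite Px.
Qed.

End FindInIota.

Lemma filter_iota_first (P : pred nat) a m x : a <= x < a + m -> P x ->
  (forall y, a <= y < x -> ~~ P y) ->
  [seq i <- iota a m | P i] = x :: [seq i <- iota x.+1 (a + m - x.+1) | P i].
Proof.
move=> /andP [le_ax lt_xam] Px x_min.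
have -> : m = (x - a) + (a + m - x) by lia.
rewrite iotaD filter_cat (_ : a + (x - a) = x); last by lia.
have -> : [seq i <- iota a (x - a) | P i] = [::].
  apply/eqP; rewrite -[_ == _]negbK -has_filter; apply/hasP => -[y].
  by rewrite mem_iota subnKC // => /x_min /negbTE ->.
have pos : 0 < a + m - x by lia.
rewrite -(prednK pos) /= Px; congr (_ :: filter _ (iota _ _)); lia.
Qed.

Lemma Vdisp_top n f C r0 r1 x j : r0 < x <= r1 ->
  has (fun j' => C j' && (f x j' != 0%R)) (iota 0 n) ->
  (forall y, r0 < y < x -> ~~ has (fun j' => C j' && (f y j' != 0%R)) (iota 0 n)) ->
  Vdisp n f C r0 r1 r0 j = f x j.
Proof.
move=> /andP [lt_r0x le_xr1] nz_x x_min; rewrite /Vdisp eqxx orbT /=.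
by rewrite (@filter_iota_first _ r0.+1 (r1 - r0) x) //; lia.
Qed.

Section IntSums.
Local Open Scope ring_scope.
Variables (m : nat) (P : pred nat) (F : nat -> int).

Lemma sum_ge0_le1_one (x y : 'I_m) :
  (forall j : 'I_m, P j -> 0 <= F j) -> \sum_(j < m | P j) F j <= 1 ->
  P x -> F x = 1 -> P y -> y != x -> F y = 0.
Proof.
move=> F_ge0 sum_le1 Px Fx1 Py yx.
rewrite (bigD1 x) //= (bigD1 y) /= ?Py ?yx // Fx1 addrA in sum_le1.
have rest_ge0 : 0 <= \sum_(i < m | (P i && (i != x)) && (i != y)) F i.
  by apply: sumr_ge0 => i /andP [/andP [Pi _] _]; apply: F_ge0.
apply/eqP; rewrite eq_le F_ge0 // andbT -(lerD2l 1) addr0.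
by apply: le_trans sum_le1; rewrite lerDl.
Qed.

Lemma sum_ge1_exists_one :
  (forall j : 'I_m, P j -> F j \in [:: -1; 0; 1]) ->
  1 <= \sum_(j < m | P j) F j -> exists j : 'I_m, P j /\ F j = 1.
Proof.
move=> F_vals sum_ge1.
have [/existsP [j /andP [Pj /eqP Fj1]] | ] :=
  boolP [exists j : 'I_m, P j && (F j == 1)]; first by exists j.
rewrite negb_exists => /forallP no_one.
have : \sum_(j < m | P j) F j <= 0.
  apply: sumr_le0 => j Pj; have := F_vals j Pj; have := no_one j.
  by rewrite Pj !inE /= => /negbTE ->; rewrite orbF => /orP [] /eqP ->.
by move/(le_trans sum_ge1).
Qed.

End IntSums.

Lemma sum_ord_split_at n (F : nat -> int) x : x < n ->
  (\sum_(j < n) F j = \sum_(j < x) F j + F x + \sum_(j < n | (x < j)%N) F j)%R.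
Proof.
move=> lt_xn; rewrite (big_ord_widen n F (ltnW lt_xn)) (bigID (fun j : 'I_n => j < x)) /=.
rewrite -addrA; congr (_ + _)%R; rewrite (bigD1 (Ordinal lt_xn)) /= ?ltnn //.
congr (_ + _)%R; apply: eq_bigl => j; rewrite -leqNgt.
case: (ltngtP x j) => [lt_xj|//|eq_xj]; rewrite ?andbT ?andbF //=.
  by apply/eqP => e; move: lt_xj; rewrite e ltnn.
by apply/negbTE; rewrite negbK; apply/eqP/val_inj.
Qed.

Section Entries.
Variable n : nat.
Implicit Types (A : 'M[int]_n).

Lemma entE A (i j : 'I_n) : ent A i j = A i j.
Proof. by rewrite /ent !valK. Qed.

Lemma ent_ord A (i j : nat) (lt_in : i < n) (lt_jn : j < n) :
  ent A i j = A (Ordinal lt_in) (Ordinal lt_jn).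
Proof. by rewrite -entE. Qed.

Lemma ent_outside A (i j : nat) : (n <= i) || (n <= j) -> ent A i j = 0%R.
Proof.
rewrite /ent; case/orP => out; first by rewrite insubF // ltnNge out.
by case: insub => // ?; rewrite insubF // ltnNge out.
Qed.

Lemma ent_neq0 A (i j : nat) : ent A i j != 0%R -> i < n /\ j < n.
Proof.
case: (ltnP i n) => [lt_in|le_ni]; last by rewrite ent_outside ?le_ni ?eqxx.
by case: (ltnP j n) => [//|le_nj]; rewrite ent_outside ?le_nj ?orbT ?eqxx.
Qed.

Lemma ent_mkmx f (i j : nat) : i < n -> j < n -> ent (mkmx n f) i j = f i j.
Proof. by move=> lt_in lt_jn; rewrite /ent !insubT /mkmx mxE. Qed.

Lemma ent_refl A (i j : nat) : j < n -> ent (refl A) i j = ent A i (n - j.+1).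
Proof.
move=> lt_jn; case: (ltnP i n) => [lt_in|le_ni]; last by rewrite !ent_outside ?le_ni.
have lt_rev : n - j.+1 < n by exact: (rev_ord_proof (Ordinal lt_jn)).
by rewrite /ent !insubT //= /refl mxE; congr (A _ _); apply: val_inj.
Qed.

Lemma row_map_ent A (i : 'I_n) :
  [seq A i j | j <- enum 'I_n] = map (ent A i) (iota 0 n).
Proof. by rewrite -val_enum_ord -map_comp; apply: eq_map => j /=; rewrite entE. Qed.

Lemma col_map_ent A (j : 'I_n) :
  [seq A i j | i <- enum 'I_n] = map (ent A ^~ j) (iota 0 n).
Proof. by rewrite -val_enum_ord -map_comp; apply: eq_map => i /=; rewrite entE. Qed.

End Entries.

Section RectangleSums.
Variables (n : nat) (f : nat -> nat -> int).

Lemma rsum_ext g (P Q : nat -> nat -> bool) :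
  (forall i j, i < n -> j < n ->
     (if P i j then f i j else 0%R) = (if Q i j then g i j else 0%R)) ->
  rsum n f P = rsum n g Q.
Proof. by move=> fg; apply: eq_bigr => i _; apply: eq_bigr => j _; apply: fg. Qed.

Hypotheses (P : nat -> nat -> bool)
  (f_ge0 : forall i j, i < n -> j < n -> P i j -> (0 <= f i j)%R).

Lemma rsum_ge0 : (0 <= rsum n f P)%R.
Proof.
by apply: sumr_ge0 => i _; apply: sumr_ge0 => j _; case: ifP => // /f_ge0; apply.
Qed.

Lemma rsum_ge_term i j : i < n -> j < n -> P i j -> (f i j <= rsum n f P)%R.
Proof.
move=> lt_in lt_jn Pij; rewrite /rsum (bigD1 (Ordinal lt_in)) //=.
rewrite (bigD1 (Ordinal lt_jn)) //= Pij -addrA lerDl addr_ge0 //.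
  by apply: sumr_ge0 => j' _; case: ifP => // /f_ge0; apply.
by apply: sumr_ge0 => i' _; apply: sumr_ge0 => j' _; case: ifP => // /f_ge0; apply.
Qed.

End RectangleSums.

Lemma rsum_refl n (A : 'M[int]_n) P :
  rsum n (ent (refl A)) P = rsum n (ent A) (fun i j => P i (n - j.+1)).
Proof.
apply: eq_bigr => i _; rewrite (reindex_inj rev_ord_inj) /=; apply: eq_bigr => j _.
have lt_jn := ltn_ord j.
by rewrite ent_refl ?rev_ord_proof // (_ : n - (n - j.+1).+1 = j) //; lia.
Qed.

Definition first_one (g : nat -> int) (n : nat) : nat := find (fun j => g j == 1%R) (iota 0 n).

(* ell A recomputed from the data (op_row A, delta A) of the discharging procedure:
   row k of delta A keeps the opening 1, row k.+1 starts with the leading 1, and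
   below row k each column sums to 1 minus its part above row k. *)
Definition ell_of_discharge n (k : nat) (D : 'M[int]_n) : int :=
  (\sum_(j < n) (if (first_one (ent D k.+1) n < j < first_one (ent D k) n)%N then
             1 - \sum_(i < k) ent D i j else 0))%R.

Section SingleMinusOne.
Variables (n : nat) (A : 'M[int]_n).
Hypothesis asmA : in_ASM n 1 A.

Lemma asm_ent_vals i j : ent A i j \in [:: (-1)%R; 0%R; 1%R].
Proof.
case/andP: asmA => /and3P [/forallP vals _ _] _.
case: (ltnP i n) => [lt_in|le_ni]; last by rewrite ent_outside ?le_ni.
case: (ltnP j n) => [lt_jn|le_nj]; last by rewrite ent_outside ?le_nj ?orbT.
by rewrite (ent_ord _ lt_in lt_jn); apply: (forallP (vals _)).
Qed.

Lemma asm_row_sums i : i < n ->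
  (forall m, m <= n -> (0 <= \sum_(j < m) ent A i j <= 1)%R) /\
  (\sum_(j < n) ent A i j = 1)%R.
Proof.
case/andP: asmA => /and3P [_ /forallP rows _] _ lt_in.
by apply: alt_ok_iota_sums; rewrite -(row_map_ent A (Ordinal lt_in)).
Qed.

Lemma asm_col_sums j : j < n ->
  (forall m, m <= n -> (0 <= \sum_(i < m) ent A i j <= 1)%R) /\
  (\sum_(i < n) ent A i j = 1)%R.
Proof.
case/andP: asmA => /and3P [_ _ /forallP cols] _ lt_jn.
by apply: (@alt_ok_iota_sums (ent A ^~ j)); rewrite -(col_map_ent A (Ordinal lt_jn)).
Qed.

Lemma minus_one_position :
  [/\ cl_row A < n, op_col A < n, ent A (cl_row A) (op_col A) = (-1)%R &
      forall i j, ent A i j = (-1)%R -> i = cl_row A /\ j = op_col A].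
Proof.
case/andP: asmA => _ /cards1P [[r p] negs].
have Arp : ent A r p = (-1)%R.
  by have := set11 (r, p); rewrite -negs inE entE => /eqP.
have negE (i j : nat) : ent A i j = (-1)%R -> i = r /\ j = p.
  move=> Aij; have [lt_in lt_jn] : i < n /\ j < n.
    by apply: (@ent_neq0 n A); rewrite Aij oppr_eq0 oner_eq0.
  have : (Ordinal lt_in, Ordinal lt_jn) \in [set ij | A ij.1 ij.2 == (-1)%R].
    by rewrite inE /= -(ent_ord A lt_in lt_jn) Aij.
  by rewrite negs => /set1P [<- <-].
have cl_r : cl_row A = r.
  apply: find_iota_eq => //; first by apply/hasP; exists (val p); rewrite ?mem_iota ?Arp /=.
  by move=> y lt_yr; apply/hasP => -[j _ /eqP /negE [eyr _]]; rewrite eyr ltnn in lt_yr.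
have op_p : op_col A = p.
  rewrite /op_col cl_r; apply: find_iota_eq; rewrite ?Arp ?ltn_ord //.
  by move=> y lt_yp; apply/eqP => /negE [_ eyp]; rewrite eyp ltnn in lt_yp.
by rewrite cl_r op_p; split=> // i j /negE.
Qed.

Lemma asm_ent_ge0 i j : (i != cl_row A) || (j != op_col A) -> (0 <= ent A i j)%R.
Proof.
have [_ _ _ negE] := minus_one_position.
have := asm_ent_vals i j; rewrite !inE => /or3P [/eqP Aij|/eqP ->|/eqP ->] //.
by have [-> ->] := negE _ _ Aij; rewrite !eqxx.
Qed.

Lemma row_one_unique i x j :
  i != cl_row A -> ent A i x = 1%R -> j != x -> ent A i j = 0%R.
Proof.
move=> i_ncl Aix1 jx.
have [lt_in lt_xn] : i < n /\ x < n by apply: (@ent_neq0 n A); rewrite Aix1 oner_eq0.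
case: (ltnP j n) => [lt_jn|le_nj]; last by rewrite ent_outside // le_nj orbT.
have [_ total] := asm_row_sums lt_in.
apply: (@sum_ge0_le1_one n xpredT (ent A i) (Ordinal lt_xn) (Ordinal lt_jn)) => //.
- by move=> j' _; apply: asm_ent_ge0; rewrite i_ncl.
- by rewrite total.
Qed.

Lemma op_row_spec :
  [/\ op_row A < cl_row A, ent A (op_row A) (op_col A) = 1%R,
      forall y, y < op_row A -> ent A y (op_col A) != 1%R &
      forall j, j != op_col A -> ent A (op_row A) j = 0%R].
Proof.
have [lt_rn lt_pn Arp _] := minus_one_position.
set r := cl_row A in lt_rn Arp *; set p := op_col A in lt_pn Arp *.
have [prefix _] := asm_col_sums lt_pn.
have /andP [above_ge1 _] : (0 <= \sum_(i < r) ent A i p - 1 <= 1)%R.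
  by have := prefix r.+1 lt_rn; rewrite big_ord_recr /= Arp.
rewrite subr_ge0 in above_ge1.
have [i [_ Aip1]] :=
  @sum_ge1_exists_one r xpredT (ent A ^~ p) (fun i _ => asm_ent_vals i p) above_ge1.
have has_one : has (fun i => (i < r) && (ent A i p == 1%R)) (iota 0 n).
  apply/hasP; exists (val i); last by rewrite ltn_ord Aip1 eqxx.
  by rewrite mem_iota (ltn_trans (ltn_ord i) lt_rn).
have [_ /andP [lt_kr /eqP Akp1] k_min] := find_iota_spec has_one.
rewrite /op_row -/r -/p; split=> // [y lt_yk|j jp].
  by have := k_min y lt_yk; rewrite (ltn_trans lt_yk lt_kr).
by apply: (row_one_unique _ Akp1 jp); rewrite neq_ltn lt_kr.
Qed.

Lemma cl_row_left_sum : (\sum_(j < op_col A) ent A (cl_row A) j = 1)%R.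
Proof.
have [lt_rn lt_pn Arp _] := minus_one_position.
have [prefix _] := asm_row_sums lt_rn.
have /andP [left_ge1 _] : (0 <= \sum_(j < op_col A) ent A (cl_row A) j - 1 <= 1)%R.
  by have := prefix _ lt_pn; rewrite big_ord_recr /= Arp.
have /andP [_ left_le1] := prefix _ (ltnW lt_pn).
by apply/eqP; rewrite eq_le left_le1 -subr_ge0.
Qed.

Lemma cl_row_left_one : exists a,
  [/\ a < op_col A, ent A (cl_row A) a = 1%R &
      forall j, j < op_col A -> j != a -> ent A (cl_row A) j = 0%R].
Proof.
have left_sum := cl_row_left_sum.
have left_ge0 (j : 'I_(op_col A)) : xpredT j -> (0 <= ent A (cl_row A) j)%R.
  by move=> _; apply: asm_ent_ge0; rewrite eqxx /= neq_ltn (ltn_ord j).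
have left_ge1 : (1 <= \sum_(j < op_col A) ent A (cl_row A) j)%R by rewrite left_sum.
have [a [_ Ara1]] := @sum_ge1_exists_one _ xpredT (ent A (cl_row A))
  (fun j _ => asm_ent_vals _ j) left_ge1.
exists a; split=> // j lt_jp ja.
apply: (@sum_ge0_le1_one _ xpredT _ a (Ordinal lt_jp)) => //.
by rewrite left_sum.
Qed.

Lemma cl_col_spec :
  [/\ op_col A < cl_col A, cl_col A < n, ent A (cl_row A) (cl_col A) = 1%R &
      forall j, op_col A < j -> j != cl_col A -> ent A (cl_row A) j = 0%R].
Proof.
have [lt_rn lt_pn Arp _] := minus_one_position.
set r := cl_row A in lt_rn Arp *; set p := op_col A in lt_pn Arp *.
have [_ total] := asm_row_sums lt_rn.
have right_sum : (\sum_(j < n | (p < j)%N) ent A r j = 1)%R.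
  by move: total; rewrite (sum_ord_split_at _ lt_pn) cl_row_left_sum Arp addrN add0r.
have right_ge1 : (1 <= \sum_(j < n | (p < j)%N) ent A r j)%R by rewrite right_sum.
have [q [lt_pq Arq1]] := @sum_ge1_exists_one n (fun j => p < j) (ent A r)
  (fun j _ => asm_ent_vals r j) right_ge1.
have right_zero j : p < j -> j != q -> ent A r j = 0%R.
  move=> lt_pj jq; case: (ltnP j n) => [lt_jn|le_nj].
    apply: (@sum_ge0_le1_one n (fun j => p < j) (ent A r) q (Ordinal lt_jn)) => //.
    - by move=> j' lt_pj'; apply: asm_ent_ge0; rewrite eqxx /= neq_ltn lt_pj' orbT.
    - by rewrite right_sum.
  by rewrite ent_outside // le_nj orbT.
have -> : cl_col A = q.
  apply: find_iota_eq; rewrite ?ltn_ord ?lt_pq ?Arq1 ?eqxx //.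
  move=> y lt_yq; apply/andP => -[lt_py /eqP Ary1].
  have := right_zero y lt_py (negbT (ltn_eqF lt_yq)).
  by rewrite Ary1 => /eqP; rewrite oner_eq0.
by split.
Qed.

Lemma lead_row_spec :
  [/\ op_row A < lead_row A, lead_row A <= cl_row A,
      has (fun j => (j < op_col A) && (ent A (lead_row A) j == 1%R)) (iota 0 n) &
      forall i j, op_row A < i -> i < lead_row A -> j < op_col A -> ent A i j = 0%R].
Proof.
have [lt_rn lt_pn _ negE] := minus_one_position.
have [lt_kr _ _ _] := op_row_spec.
have [a [lt_ap Ara1 _]] := cl_row_left_one.
set Q := fun i => (op_row A < i) &&
  has (fun j => (j < op_col A) && (ent A i j == 1%R)) (iota 0 n).
have Q_cl : Q (cl_row A).
  rewrite /Q lt_kr; apply/hasP; exists a; last by rewrite lt_ap Ara1 eqxx.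
  by rewrite mem_iota (ltn_trans lt_ap lt_pn).
have hasQ : has Q (iota 0 n) by apply/hasP; exists (cl_row A); rewrite ?mem_iota.
have [_ /andP [lt_kl has_l] l_min] := find_iota_spec hasQ.
have le_lr : lead_row A <= cl_row A.
  by rewrite leqNgt; apply/negP => /l_min; rewrite Q_cl.
rewrite /lead_row -/Q in le_lr *; split=> // i j lt_ki lt_il lt_jp.
have i_ncl : i != cl_row A by rewrite neq_ltn (leq_trans lt_il le_lr).
have := asm_ent_vals i j; rewrite !inE => /or3P [/eqP Aij|/eqP //|/eqP Aij1].
  by have [eicl _] := negE _ _ Aij; rewrite eicl eqxx in i_ncl.
have [_ lt_jn] : i < n /\ j < n by apply: (@ent_neq0 n A); rewrite Aij1 oner_eq0.
have := l_min _ lt_il; rewrite /Q lt_ki /= => /hasP; case.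
by exists j; rewrite ?mem_iota ?lt_jp ?Aij1 ?eqxx.
Qed.

Lemma lead_col_spec :
  [/\ lead_col A < op_col A, ent A (lead_row A) (lead_col A) = 1%R &
      forall j, j < op_col A -> j != lead_col A -> ent A (lead_row A) j = 0%R].
Proof.
have [_ _ has_l _] := lead_row_spec.
have [_ /andP [lt_cp /eqP Alc1] _] := find_iota_spec has_l.
rewrite -/(lead_col A) in lt_cp Alc1; split=> // j lt_jp j_nlc.
have [eq_lr|l_ncl] := eqVneq (lead_row A) (cl_row A); last exact: row_one_unique Alc1 j_nlc.
have [a [_ Ara1 left_zero]] := cl_row_left_one.
rewrite eq_lr in Alc1 *.
have [lc_a|lc_na] := eqVneq (lead_col A) a; last by move: Alc1; rewrite left_zero.
by apply: left_zero lt_jp _; rewrite -lc_a.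
Qed.

Lemma ell_column_sums :
  ell A = (\sum_(j < n) (if (lead_col A < j < op_col A)%N then
             1 - \sum_(i < op_row A) ent A i j else 0))%R.
Proof.
have [lt_kr _ _ k_row] := op_row_spec.
have [lt_rn _ _ _] := minus_one_position.
rewrite /ell /rsum exchange_big /=; apply: eq_bigr => j _.
case: ifP => [/andP [_ lt_jp]|_]; last by apply: big1 => i _; rewrite andbF.
have [_ col_sum] := asm_col_sums (ltn_ord j).
have lt_kn : op_row A < n by apply: ltn_trans lt_rn.
rewrite (sum_ord_split_at (ent A ^~ j) lt_kn) /= k_row ?addr0 in col_sum; last first.
  by rewrite neq_ltn lt_jp.
rewrite -col_sum addrC addKr [RHS]big_mkcond.
by apply: eq_bigr => i _; rewrite andbT.
Qed.

Lemma delta_above_op_row i j : i < op_row A -> j < n -> ent (delta A) i j = ent A i j.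
Proof.
move=> lt_ik lt_jn; have [lt_kr _ _ _] := op_row_spec.
have [lt_rn _ _ _] := minus_one_position.
rewrite /delta ent_mkmx //=; last by lia.
have -> : (op_row A <= i) = false by lia.
have -> : (op_row A < i) = false by lia.
have -> : (cl_row A < i) = false by lia.
have -> : (i == cl_row A) = false by lia.
by rewrite /= !andbF.
Qed.

Lemma delta_op_row j : j < n -> ent (delta A) (op_row A) j = ent A (op_row A) j.
Proof.
move=> lt_jn; have [lt_kr _ _ k_row] := op_row_spec.
have [lt_rn _ _ _] := minus_one_position.
rewrite /delta ent_mkmx //=; last by lia.
have -> : (cl_row A < op_row A) = false by lia.
have -> : (op_row A == cl_row A) = false by lia.
rewrite leqnn eqxx ltnn (ltnW lt_kr) /= !andbF /=.
by case: ltnP => //= le_pj; rewrite k_row //; lia.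
Qed.

Lemma delta_below_op_row j : j < op_col A ->
  ent (delta A) (op_row A).+1 j = ent A (lead_row A) j.
Proof.
move=> lt_jp; have [lt_kr _ _ _] := op_row_spec.
have [lt_rn lt_pn _ _] := minus_one_position.
have [lt_pq lt_qn _ _] := cl_col_spec.
have [lt_kl le_lr _ above_lead] := lead_row_spec.
have [lt_cp Alc1 _] := lead_col_spec.
rewrite /delta ent_mkmx //=; try lia.
have -> : ((op_row A).+1 == op_row A) = false by lia.
rewrite lt_jp lt_kr leqnSn leqnn (ltnW lt_kr) /=.
set g := (X in Vdisp n X).
have gE y j' : y <= cl_row A -> j' < op_col A -> g y j' = ent A y j'.
  move=> le_yr lt_j'p; rewrite /g.
  have -> : (cl_row A < y) = false by lia.
  have -> : (j' == op_col A) = false by lia.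
  have -> : (j' == cl_col A) = false by lia.
  by rewrite /= andbF.
rewrite (@Vdisp_top n g _ _ _ (lead_row A)) ?gE //; try lia.
  apply/hasP; exists (lead_col A); first by rewrite mem_iota; lia.
  by rewrite lt_cp gE ?Alc1 ?oner_eq0.
move=> y /andP [lt_ky lt_yl]; apply/hasP => -[j' _ /andP [lt_j'p]].
by rewrite gE ?above_lead ?eqxx //; lia.
Qed.

Lemma ell_discharge : ell A = ell_of_discharge (op_row A) (delta A).
Proof.
have [_ Akp1 _ k_row] := op_row_spec.
have [_ lt_pn _ _] := minus_one_position.
have [lt_cp Alc1 lead_row_zero] := lead_col_spec.
rewrite /ell_of_discharge.
have -> : first_one (ent (delta A) (op_row A)) n = op_col A.
  apply: find_iota_eq => // [|y lt_yp]; first by rewrite delta_op_row // Akp1.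
  by rewrite delta_op_row ?(ltn_trans lt_yp) // k_row // neq_ltn lt_yp.
have -> : first_one (ent (delta A) (op_row A).+1) n = lead_col A.
  apply: find_iota_eq => [|| y lt_yc]; first by lia.
    by rewrite delta_below_op_row // Alc1.
  have lt_yp := ltn_trans lt_yc lt_cp.
  by rewrite delta_below_op_row // lead_row_zero // neq_ltn lt_yc.
rewrite ell_column_sums; apply: eq_bigr => j _; case: ifP => // _.
by congr (_ - _)%R; apply: eq_bigr => i _; rewrite delta_above_op_row.
Qed.

Lemma ell_ge0 : (0 <= ell A)%R.
Proof.
by apply: rsum_ge0 => i j _ _ /and3P [_ _ lt_jp]; rewrite asm_ent_ge0 // orbC neq_ltn lt_jp.
Qed.

Lemma cpar_ge0 : (0 <= cpar A)%R.
Proof. by apply: rsum_ge0 => i j _ _ /andP [lt_ri _]; rewrite asm_ent_ge0 // gtn_eqF. Qed.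

Lemma charged_ge0 : (0 <= charged A)%R.
Proof.
by apply: rsum_ge0 => i j _ _ /andP [/andP [_ lt_ir] _]; rewrite asm_ent_ge0 // ltn_eqF.
Qed.

Lemma Epar_ge0 : ~~ negative A -> (0 <= Epar A)%R.
Proof. by rewrite /Epar => /negbTE ->; case: ifP => // _; apply: charged_ge0. Qed.

Lemma Epar_gt0 : positive A -> (0 < Epar A)%R.
Proof.
move=> posA; rewrite /Epar posA.
case/andP: posA => lt_k1r /hasP [j]; rewrite mem_iota => /andP [_ lt_jn] /andP [lt_pj /eqP A1].
have [lt_rn _ _ _] := minus_one_position.
apply: (lt_le_trans (@ltr01 int)); rewrite -A1.
apply: rsum_ge_term; rewrite ?lt_pj ?andbT; try lia.
by move=> i j' _ _ /andP [/andP [_ lt_ir] _]; rewrite asm_ent_ge0 // ltn_eqF.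
Qed.

Lemma lead_row_neutral : neutral A -> lead_row A = cl_row A.
Proof. by move/eqP=> cl_k1; have [lt_kl le_lr _ _] := lead_row_spec; lia. Qed.

Lemma ell_neutral : neutral A ->
  ell A = rsum n (ent A) (fun i j => (cl_row A < i) && (lead_col A < j < op_col A)).
Proof.
move=> neuA; have [_ _ lead_zero] := lead_col_spec.
rewrite /ell; apply: rsum_ext => i j _ _.
have [->|i_ncl] := eqVneq i (cl_row A).
  rewrite ltnn (eqP neuA) ltnSn /=; case: ifP => // /andP [lt_cj lt_jp].
  by rewrite -(eqP neuA) -(lead_row_neutral neuA) lead_zero // gtn_eqF.
rewrite (eqP neuA) in i_ncl *.
by have -> : (op_row A < i) = ((op_row A).+1 < i) by lia.
Qed.

End SingleMinusOne.

Section Reflection.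
Variable n : nat.
Implicit Type A : 'M[int]_n.

Lemma reflK A : refl (refl A) = A.
Proof. by apply/matrixP => i j; rewrite /refl !mxE rev_ordK. Qed.

Lemma rev_iota0 : rev (iota 0 n) = map (fun j => n - j.+1) (iota 0 n).
Proof.
apply: (@eq_from_nth _ 0); first by rewrite size_rev size_map.
move=> i; rewrite size_rev size_iota => lt_in.
by rewrite nth_rev ?size_iota // (nth_map 0) ?size_iota // !nth_iota //; lia.
Qed.

Lemma refl_asm A : in_ASM n 1 A -> in_ASM n 1 (refl A).
Proof.
case/andP => /and3P [/forallP vals /forallP rows /forallP cols] negs.
apply/andP; split; first (apply/and3P; split).
- by apply/forallP => i; apply/forallP => j; rewrite /refl mxE; apply: (forallP (vals i)).
- apply/forallP => i; rewrite row_map_ent.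
  have -> : map (ent (refl A) i) (iota 0 n) = rev (map (ent A i) (iota 0 n)).
    rewrite -map_rev rev_iota0 -map_comp; apply/eq_in_map => j /=.
    by rewrite mem_iota => /andP [_ lt_jn]; rewrite ent_refl.
  by rewrite alt_ok_rev -row_map_ent.
- apply/forallP => j.
  have -> : [seq refl A i j | i <- enum 'I_n] = [seq A i (rev_ord j) | i <- enum 'I_n].
    by apply: eq_map => i; rewrite /refl mxE.
  exact: cols.
rewrite /num_neg.
have -> : [set ij : 'I_n * 'I_n | refl A ij.1 ij.2 == (-1)%R] =
    (fun ij : 'I_n * 'I_n => (ij.1, rev_ord ij.2)) @^-1:
      [set ij : 'I_n * 'I_n | A ij.1 ij.2 == (-1)%R].
  by apply/setP => ij; rewrite !inE /refl mxE.
rewrite card_preimset // => -[i j] [i' j'] /= [-> eq_rev].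
by congr (_, _); apply: val_inj; move: eq_rev (ltn_ord j) (ltn_ord j') => /=; lia.
Qed.

Section SingleMinusOneReflected.
Variable A : 'M[int]_n.
Hypothesis asmA : in_ASM n 1 A.

Lemma refl_positions :
  [/\ cl_row (refl A) = cl_row A, op_col (refl A) = n - (op_col A).+1 &
      op_row (refl A) = op_row A].
Proof.
have asmR := refl_asm asmA.
have [lt_rn lt_pn _ _] := minus_one_position asmA.
have [_ _ _ negR] := minus_one_position asmR.
have Rrp : ent (refl A) (cl_row A) (n - (op_col A).+1) = (-1)%R.
  have [_ _ Arp _] := minus_one_position asmA.
  by rewrite ent_refl; [rewrite (_ : n - _ = op_col A) //|]; lia.
have [cl_R op_R] := negR _ _ Rrp; rewrite -cl_R -op_R; split=> //.
have [_ Akp1 k_min _] := op_row_spec asmA.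
have [_ Rkp1 k_min' _] := op_row_spec asmR.
rewrite -op_R in Rkp1 k_min'.
have rev_p : n - (n - (op_col A).+1).+1 = op_col A by lia.
rewrite ent_refl ?rev_p in Rkp1; last by lia.
case: (ltngtP (op_row (refl A)) (op_row A)) => // lt.
  by move: (k_min _ lt); rewrite Rkp1 eqxx.
by move: (k_min' _ lt); rewrite ent_refl ?rev_p ?Akp1 ?eqxx //; lia.
Qed.

Lemma negative_refl : negative A -> ~~ negative (refl A).
Proof.
case/andP => lt_k1r /hasP [a _ /andP [lt_ap /eqP Ara1]].
have [cl_R op_R k_R] := refl_positions.
have [lt_rn lt_pn _ _] := minus_one_position asmA.
rewrite /negative cl_R op_R k_R lt_k1r /=; apply/hasP => -[j].
rewrite mem_iota => /andP [_ lt_jn] /andP [lt_jp /eqP].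
by rewrite ent_refl // (row_one_unique asmA _ Ara1) //; lia.
Qed.

Lemma neutral_refl : neutral (refl A) = neutral A.
Proof. by have [cl_R _ k_R] := refl_positions; rewrite /neutral cl_R k_R. Qed.

Lemma cl_col_refl : neutral A -> cl_col (refl A) = n - (lead_col A).+1.
Proof.
move=> neuA; have [cl_R op_R _] := refl_positions.
have [lt_pq lt_qn Rq1 _] := cl_col_spec (refl_asm asmA).
have [lt_cp _ lead_zero] := lead_col_spec asmA.
rewrite cl_R op_R ent_refl // in lt_pq Rq1.
rewrite (lead_row_neutral asmA neuA) in lead_zero.
have [e|ne] := eqVneq (n - (cl_col (refl A)).+1) (lead_col A); first by lia.
by move: Rq1; rewrite lead_zero //; lia.
Qed.

Lemma lead_col_refl : neutral A -> lead_col (refl A) = n - (cl_col A).+1.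
Proof.
move=> neuA; have asmR := refl_asm asmA; have [cl_R op_R _] := refl_positions.
have [lt_lc Rlc1 _] := lead_col_spec asmR.
have [lt_pq lt_qn _ right_zero] := cl_col_spec asmA.
rewrite (lead_row_neutral asmR) ?neutral_refl // cl_R op_R in lt_lc Rlc1.
rewrite ent_refl in Rlc1; last by lia.
have [e|ne] := eqVneq (n - (lead_col (refl A)).+1) (cl_col A); first by lia.
by move: Rlc1; rewrite right_zero //; lia.
Qed.

Lemma ell_refl_neutral : neutral A -> ell (refl A) = cpar A.
Proof.
move=> neuA; have [cl_R op_R _] := refl_positions.
have [lt_pq lt_qn _ _] := cl_col_spec asmA.
rewrite (ell_neutral (refl_asm asmA)) ?neutral_refl // lead_col_refl // cl_R op_R.
rewrite rsum_refl /cpar; apply: rsum_ext => i j _ lt_jn.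
have -> : (n - (cl_col A).+1 < n - j.+1 < n - (op_col A).+1) = (op_col A < j < cl_col A).
  by lia.
by [].
Qed.

Lemma cpar_refl_neutral : neutral A -> cpar (refl A) = ell A.
Proof.
move=> neuA; have [cl_R op_R _] := refl_positions.
have [lt_rn lt_pn _ _] := minus_one_position asmA.
rewrite /cpar cl_R op_R cl_col_refl // rsum_refl (ell_neutral asmA neuA).
apply: rsum_ext => i j _ lt_jn.
have -> : (n - (op_col A).+1 < n - j.+1 < n - (lead_col A).+1) = (lead_col A < j < op_col A).
  by lia.
by [].
Qed.

End SingleMinusOneReflected.
End Reflection.

Lemma Lambda_pn_neutral n (A N : 'M[int]_n) E : in_ASM n 1 A -> Lambda_pn A N E ->
  [/\ in_ASM n 1 N, neutral N, ell N = ell A & cpar N = (cpar A + Epar A)%R].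
Proof.
move=> asmA [_ asmN posN]; rewrite /Delta => -[k_N delta_N c_N E_N].
have neuN : neutral N by case/orP: posN => // /(Epar_gt0 asmN); rewrite E_N ltxx.
by split=> //; rewrite (ell_discharge asmN) (ell_discharge asmA) k_N delta_N.
Qed.

Theorem lemma3 (n : nat) (A N : 'M[int]_n) (E : int) :
  in_ASM n 1 A -> Lambda A N E ->
  ((- ell N <= Bpar A)%R /\ (Bpar A <= cpar N)%R).
Proof.
move=> asmA; rewrite /Lambda /Bpar; case: ifP => [negA | /negbT nnegA] LamA.
  have asmR := refl_asm asmA.
  have [asmN neuN ellN cparN] := Lambda_pn_neutral asmR LamA.
  rewrite -[N]reflK (ell_refl_neutral asmN neuN) (cpar_refl_neutral asmN neuN) ellN cparN.
  have := Epar_ge0 asmR (negative_refl asmA negA).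
  have := cpar_ge0 asmR; have := ell_ge0 asmR; lia.
have [_ _ -> ->] := Lambda_pn_neutral asmA LamA.
have := Epar_ge0 asmA nnegA; have := cpar_ge0 asmA; have := ell_ge0 asmA; lia.
Qed.
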